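(* Consider a graph $G=(V, E)$ that has no isolated vertices and where each node has a $b$-bit identifier. There is a deterministic distributed algorithm in the $\mathsf{CONGEST}$ model that, in $O(\log^* b)$ rounds, colors the vertices of $V$ blue or red such that each color has at most $3|V|/4$ vertices.
   Context: Identifiers are unique. $\mathsf{CONGEST}$ model: synchronous rounds on the network $G$, per round each node sends one message of $O(b)$ bits (the identifier length) to each neighbor; nodes initially know only local information, and at the end each node knows its own color. $\log^*$ denotes the iterated logarithm. *)

From mathcomp Require Import all_boot.
Set Implicit Arguments. Unset Strict Implicit. Unset Printing Implicit Defensive.

(* Nodes initially know only their identifier and their degree; the
   algorithm is parameterised by the identifier length b (given separately,
   as a function b |-> algorithm).  Port i of node v leads to the i-th
   neighbour of v in [nbrs e v] (an arbitrary, adversarial order).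
   - ca_init id deg   : initial local state
   - ca_send s p      : message (a natural number, i.e. a bit string) sent
                        through port p in a round when the state is s
   - ca_recv s ms     : new state after receiving ms (ms`_p from port p)
   - ca_out s         : final colour (true = blue, false = red)
   - ca_rounds        : number of synchronous rounds executed. *)
Record congest_algo := CongestAlgo {
  ca_St : Type;
  ca_rounds : nat;
  ca_init : nat -> nat -> ca_St;
  ca_send : ca_St -> nat -> nat;
  ca_recv : ca_St -> seq nat -> ca_St;
  ca_out : ca_St -> bool }.

Definition nbrs (T : finType) (e : rel T) (v : T) : seq T :=
  [seq u <- enum T | e v u].

Fixpoint exec (A : congest_algo) (T : finType) (e : rel T) (id : T -> nat)
    (r : nat) : T -> ca_St A :=
  match r with
  | 0 => fun v => ca_init A (id v) (size (nbrs e v))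
  | r'.+1 => fun v =>
      ca_recv (exec A e id r' v)
        [seq ca_send (exec A e id r' u) (index v (nbrs e u)) | u <- nbrs e v]
  end.

Definition color_of (A : congest_algo) (T : finType) (e : rel T)
    (id : T -> nat) (v : T) : bool :=
  ca_out (exec A e id (ca_rounds A) v).

Definition bandwidth_ok (A : congest_algo) (T : finType) (e : rel T)
    (id : T -> nat) (bits : nat) : Prop :=
  forall r u v, r < ca_rounds A -> e u v ->
    ca_send (exec A e id r u) (index v (nbrs e u)) < 2 ^ bits.

Fixpoint log_star_fuel (fuel n : nat) : nat :=
  match fuel with
  | 0 => 0
  | f.+1 => if n <= 1 then 0 else (log_star_fuel f (trunc_log 2 n)).+1
  end.
Definition log_star (n : nat) : nat := log_star_fuel n n.

From mathcomp Require Import all_boot zify.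
Set Implicit Arguments. Unset Strict Implicit. Unset Printing Implicit Defensive.

(* Every node points to its first neighbour; these parent pointers form a
   pseudoforest.  A node whose parent has several children is coloured by the
   parity of its rank among its siblings and is paired with a sibling of
   adjacent rank.  Only children whose parent or unique child is also an only
   child form chains; on them, Cole-Vishkin colour reduction along the parent
   pointers brings the b-bit identifiers down to 6 colours in log* b + 3
   rounds, 6 more rounds build a maximal independent set colour class by
   colour class, and a chain node is paired with a chain neighbour on the
   other side of the set.  Any other only child has a parent with siblings and
   takes the colour opposite to its parent's.  Thus every node has a partner
   of the other colour and every node is the partner of at most three nodes,
   so each colour class is at most three times the other one, i.e. at most
   3|V|/4. *)

Fixpoint cv_step_fuel (f a b : nat) : nat :=
  if f is f'.+1 then
    if odd a != odd b then nat_of_bool (odd a) else (cv_step_fuel f' a./2 b./2).+2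
  else 0.

(* [2 i + a_i] for the lowest bit position [i] where [a] and [b] differ *)
Definition cv_step (a b : nat) : nat := cv_step_fuel (a + b) a b.

Definition cv_range (B : nat) : nat := (trunc_log 2 B).*2.+1.

Lemma cv_step_fuel_neq f1 f2 a b c :
  a != b -> b != c -> a + b <= f1 -> b + c <= f2 ->
  cv_step_fuel f1 a b != cv_step_fuel f2 b c.
Proof.
elim: f1 f2 a b c => [|f1 IH] [|f2] a b c /eqP ab /eqP bc h1 h2 /=; try lia.
case: (odd a) (odd b) (odd c) (odd_double_half a) (odd_double_half b)
  (odd_double_half c) => [] [] [] /= ea eb ec //; apply: IH; lia.
Qed.

Lemma cv_step_neq a b c : a != b -> b != c -> cv_step a b != cv_step b c.
Proof. by move=> ab bc; apply: cv_step_fuel_neq. Qed.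

Lemma cv_step_fuel_le f B a b : a <= B -> b <= B -> a != b -> a + b <= f ->
  cv_step_fuel f a b <= cv_range B.
Proof.
elim: f B a b => [|f IH] B a b aB bB /eqP ab h //=.
case: ifP => [_|/negbFE/eqP oab]; first by case: (odd a).
have B2 : 1 < B by lia.
rewrite /cv_range (trunc_log2S B2) doubleS !ltnS; apply: IH; lia.
Qed.

Lemma cv_step_le B a b : a <= B -> b <= B -> a != b -> cv_step a b <= cv_range B.
Proof. by move=> aB bB ab; apply: cv_step_fuel_le. Qed.

Lemma trunc_log2_le n j : n < 2 ^ j.+1 -> trunc_log 2 n <= j.
Proof.
move=> lt_n; rewrite leqNgt; apply/negP => lt_j.
have n_gt0 : 0 < n by case: n lt_j {lt_n}; rewrite ?trunc_log0.
have := trunc_logP (isT : 1 < 2) n_gt0.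
have : 2 ^ j.+1 <= 2 ^ trunc_log 2 n by rewrite leq_exp2l.
lia.
Qed.

Lemma trunc_log2_lt n : 1 < n -> trunc_log 2 n < n.
Proof.
move=> n_gt1; apply: leq_trans (trunc_logP (isT : 1 < 2) (ltnW n_gt1)).
exact: ltn_expl.
Qed.

Lemma iter_log_star n : iter (log_star n) (trunc_log 2) n <= 1.
Proof.
suff h f m : m <= f -> iter (log_star_fuel f m) (trunc_log 2) m <= 1 by exact: h.
elim: f m => [|f IH] m /= m_le; first by lia.
case: ifP => // /negbT; rewrite -ltnNge => m_gt1.
rewrite iterSr; apply: IH; have := trunc_log2_lt m_gt1; lia.
Qed.

Lemma leq_cv_range m n : m <= n -> cv_range m <= cv_range n.
Proof. by move=> h; rewrite ltnS leq_double leq_trunc_log. Qed.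

Lemma cv_range_ge5 n : 5 <= n -> 5 <= cv_range n.
Proof.
move=> n_ge5; have : 2 <= trunc_log 2 n by apply: trunc_log_max => //; lia.
rewrite /cv_range; lia.
Qed.

Lemma cv_range_le n : 5 <= n -> cv_range n <= n.
Proof.
move=> n_ge5; have := trunc_logP (isT : 1 < 2) (leq_trans (isT : 0 < 5) n_ge5).
rewrite /cv_range; case: (trunc_log 2 n) => [|[|[|k]]] /=; try lia.
move=> /(leq_trans _); apply; elim: k => [|k IH] //; rewrite expnS; lia.
Qed.

Lemma cv_range_shift n : cv_range (n.*2 + 13) <= (trunc_log 2 n).*2 + 13.
Proof.
case: n => [|n] //; rewrite /cv_range.
have n_lt := trunc_log_ltn n.+1 (isT : 1 < 2); rewrite expnS in n_lt.
have : trunc_log 2 (n.+1.*2 + 13) <= trunc_log 2 n.+1 + 4.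
  by apply: trunc_log2_le; rewrite -(addnS _ 4) expnD expnS; lia.
lia.
Qed.

(* The offset keeps the bound where [cv_range] is decreasing; 5 is its
   fixed point. *)
Definition cv_bound (b t : nat) : nat := iter t cv_range (2 ^ b + 5).

Lemma cv_bound_ge5 b t : 5 <= cv_bound b t.
Proof. by elim: t => [|t IH] /=; [lia | apply: cv_range_ge5]. Qed.

Lemma cv_bound_le b t : cv_bound b t <= 2 ^ b + 5.
Proof.
elim: t => [|t IH] //=; exact: leq_trans (cv_range_le (cv_bound_ge5 b t)) IH.
Qed.

Lemma cv_bound_log b t : cv_bound b t.+1 <= (iter t (trunc_log 2) b).*2 + 13.
Proof.
elim: t => [|t IH] /=.
  have : trunc_log 2 (2 ^ b + 5) <= b + 3.
    apply: trunc_log2_le; rewrite -(addnS b 3) expnD; have := expn_gt0 2 b; lia.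
  rewrite /cv_range; lia.
exact: leq_trans (leq_cv_range IH) (cv_range_shift _).
Qed.

Definition cv_rounds (b : nat) : nat := (log_star b).+3.

Lemma cv_bound_rounds b : cv_bound b (cv_rounds b) <= 5.
Proof.
have le15 : cv_bound b (log_star b).+1 <= 15.
  apply: leq_trans (cv_bound_log _ _) _; have := iter_log_star b; lia.
exact: leq_trans (leq_cv_range (leq_cv_range le15)) _.
Qed.

Lemma card_le_mul_fibers (aT rT : finType) (P : {set aT}) (Q : {set rT})
    (g : aT -> rT) k :
  {in P, forall v, g v \in Q} -> (forall x, #|[set v in P | g v == x]| <= k) ->
  #|P| <= k * #|Q|.
Proof.
move=> gPQ fiber_le.
rewrite -sum1_card (partition_big g (mem Q)) //= mulnC -sum_nat_const.
apply: leq_sum => x _; apply: leq_trans (fiber_le x).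
by rewrite -sum1_card; apply: eq_leq; apply: eq_bigl => v; rewrite inE.
Qed.

Lemma balanced_of_partner (T : finType) (col : pred T) (g : T -> T) :
  (forall v, col (g v) != col v) -> (forall x, #|[set v | g v == x]| <= 3) ->
  4 * #|[set v | col v]| <= 3 * #|T|.
Proof.
move=> g_flip fiber_le.
have le3 : #|[set v | col v]| <= 3 * #|~: [set v | col v]|.
  apply: (card_le_mul_fibers (g := g)).
    by move=> v; rewrite !inE; case: (col v) (g_flip v); case: (col (g v)).
  move=> x; apply: leq_trans (fiber_le x); apply: subset_leq_card.
  by apply/subsetP => v; rewrite !inE => /andP [].
have := cardsC [set v | col v]; lia.
Qed.

Lemma count_take_index (T : eqType) (P : pred T) (s : seq T) v : P v ->
  count P (take (index v s) s) = index v (filter P s).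
Proof.
move=> Pv; elim: s => [|w s IH] //=.
have [-> | ne] := eqVneq w v; first by rewrite Pv /= eqxx.
by rewrite /= IH /index; case: (P w); rewrite /= ?(negbTE ne).
Qed.

(* Round 0: every node tells its parent (port 0) that it was chosen.
   Round 1: every parent tells each child whether it has siblings and the
   parity of its rank.  Round 2: every node forwards these two bits, which its
   children read on port 0.  The next [L] rounds run Cole-Vishkin along the
   parent pointers, and the last 6 rounds the greedy independent set on the
   chains, colour class [r - L] in round [r].  A pair of bits [x, y] is sent
   as [x + 2 y]. *)
Record state := State {
  st_round : nat;
  st_chosen : seq nat;
  st_sibling : bool;
  st_rank_odd : bool;
  st_parent_lonely : bool;
  st_parent_rank_odd : bool;
  st_color : nat;
  st_mis : bool }.

Definition st_chain_up (s : state) : bool := ~~ st_sibling s && st_parent_lonely s.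
Definition st_chain_down (s : state) : bool :=
  ~~ st_sibling s && (count_mem 1 (st_chosen s) == 1).

Definition send (L : nat) (s : state) (p : nat) : nat :=
  match st_round s with
  | 0 => p == 0
  | 1 => (1 < count_mem 1 (st_chosen s)) +
         (nat_of_bool (odd (count_mem 1 (take p (st_chosen s))))).*2
  | 2 => (~~ st_sibling s) + (nat_of_bool (st_rank_odd s)).*2
  | r.+3 => if r < L then st_color s else st_mis s
  end.

Definition receive (L : nat) (s : state) (ms : seq nat) : state :=
  let m0 := nth 0 ms 0 in
  let: State r chosen sib rodd plonely prodd col mis := s in
  match r with
  | 0 => State 1 ms sib rodd plonely prodd col mis
  | 1 => State 2 chosen (odd m0) (odd m0./2) plonely prodd col mis
  | 2 => State 3 chosen sib rodd (odd m0) (odd m0./2) col mis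
  | r'.+3 =>
      if r' < L then State r'.+4 chosen sib rodd plonely prodd (cv_step col m0) mis
      else State r'.+4 chosen sib rodd plonely prodd col
        (mis || [&& col == r' - L, st_chain_up s || st_chain_down s,
                   ~~ (st_chain_up s && (m0 == 1)) &
                   ~~ (st_chain_down s && (nth 0 ms (index 1 chosen) == 1))])
  end.

Definition output (s : state) : bool :=
  if st_sibling s then st_rank_odd s
  else if st_chain_up s || st_chain_down s then st_mis s
  else ~~ st_parent_rank_odd s.

Definition balanced_coloring (b : nat) : congest_algo :=
  CongestAlgo (cv_rounds b + 9) (fun i _ => State 0 [::] false false false false i false)
    (send (cv_rounds b)) (receive (cv_rounds b)) output.

Section Pseudoforest.
Variables (T : finType) (e : rel T).

Definition parent (v : T) : T := head v (nbrs e v).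
Definition children (x : T) : seq T := [seq u <- nbrs e x | parent u == x].
Definition nchildren (x : T) : nat := size (children x).
Definition has_sibling (v : T) : bool := 1 < nchildren (parent v).
Definition rank (v : T) : nat := index v (children (parent v)).
Definition child (x : T) : T :=
  nth x (nbrs e x) (find (fun u => parent u == x) (nbrs e x)).
Definition chain_up (v : T) : bool := ~~ has_sibling v && ~~ has_sibling (parent v).
Definition chain_down (v : T) : bool := ~~ has_sibling v && (nchildren v == 1).

Hypotheses (e_sym : symmetric e) (e_irr : irreflexive e)
  (e_total : forall v, exists u, e v u).

Lemma mem_nbrs v u : (u \in nbrs e v) = e v u.
Proof. by rewrite mem_filter mem_enum andbT. Qed.

Lemma nbrs_gt0 v : 0 < size (nbrs e v).
Proof. by have [u] := e_total v; rewrite -mem_nbrs; case: (nbrs e v). Qed.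

Lemma e_parent v : e v (parent v).
Proof.
rewrite -mem_nbrs /parent; have := nbrs_gt0 v.
by case: (nbrs e v) => //= w s _; rewrite inE eqxx.
Qed.

Lemma parent_neq v : parent v != v.
Proof. by apply: contraTneq (e_parent v) => ->; rewrite e_irr. Qed.

Lemma mem_children u x : (u \in children x) = (parent u == x).
Proof.
rewrite mem_filter mem_nbrs andb_idr // => /eqP <-.
by rewrite e_sym e_parent.
Qed.

Lemma uniq_children x : uniq (children x).
Proof. by rewrite filter_uniq // filter_uniq // enum_uniq. Qed.

Lemma rank_lt v : rank v < nchildren (parent v).
Proof. by rewrite index_mem mem_children. Qed.

Lemma nchildren_parent v : ~~ has_sibling v -> nchildren (parent v) = 1.
Proof. by have := rank_lt v; rewrite /has_sibling; lia. Qed.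

Lemma mem_child x : 0 < nchildren x -> child x \in children x.
Proof.
rewrite mem_children /nchildren size_filter -has_count => has_x.
exact: (nth_find x (a := fun u => parent u == x)).
Qed.

Lemma parent_child x : 0 < nchildren x -> parent (child x) = x.
Proof. by move/mem_child; rewrite mem_children => /eqP. Qed.

Lemma only_child x v : nchildren x = 1 -> parent v = x -> v = child x.
Proof.
move=> x1 vx; have := mem_child (eq_leq (esym x1)).
have : v \in children x by rewrite mem_children vx.
move: x1; rewrite /nchildren; case: (children x) => [|w [|]] //= _.
by rewrite !inE => /eqP -> /eqP ->.
Qed.

Lemma chain_down_child v : chain_down v -> parent (child v) = v /\ chain_up (child v).
Proof.
case/andP=> no_sib /eqP v1; have pc : parent (child v) = v by rewrite parent_child ?v1.
by rewrite /chain_up /has_sibling pc v1 no_sib.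
Qed.

Lemma chain_up_parent v : chain_up v -> chain_down (parent v) /\ child (parent v) = v.
Proof.
case/andP=> no_sib no_sib_p; have p1 := nchildren_parent no_sib.
by rewrite /chain_down no_sib_p p1 -(only_child p1 (erefl _)).
Qed.

Section Coloring.
Variables (id : T -> nat) (b : nat).
Hypotheses (id_inj : injective id) (id_lt : forall v, id v < 2 ^ b).

Fixpoint cv_color (t : nat) (v : T) : nat :=
  if t is t'.+1 then cv_step (cv_color t' v) (cv_color t' (parent v)) else id v.

Lemma cv_color_proper t v : cv_color t v != cv_color t (parent v).
Proof.
elim: t v => [|t IH] v /=; last exact: cv_step_neq.
by rewrite (inj_eq id_inj) eq_sym parent_neq.
Qed.

Lemma cv_color_le t v : cv_color t v <= cv_bound b t.
Proof.
elim: t v => [|t IH] v /=; first by have := id_lt v; rewrite /cv_bound /=; lia.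
exact: cv_step_le (IH v) (IH (parent v)) (cv_color_proper t v).
Qed.

Definition six_color (v : T) : nat := cv_color (cv_rounds b) v.

Lemma six_color_le v : six_color v <= 5.
Proof. exact: leq_trans (cv_color_le _ _) (cv_bound_rounds b). Qed.

Definition on_chain (v : T) : bool := chain_up v || chain_down v.

Fixpoint greedy_mis (j : nat) (v : T) : bool :=
  if j is j'.+1 then
    greedy_mis j' v || [&& six_color v == j', on_chain v,
      ~~ (chain_up v && greedy_mis j' (parent v)) &
      ~~ (chain_down v && greedy_mis j' (child v))]
  else false.

Lemma greedy_mis_mono j j' v : j <= j' -> greedy_mis j v -> greedy_mis j' v.
Proof.
move/subnKC <-; elim: (j' - j) => [|k IH]; first by rewrite addn0.
by rewrite addnS /= => /IH ->.
Qed.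

Lemma greedy_mis_indep j v :
  chain_up v -> ~~ (greedy_mis j v && greedy_mis j (parent v)).
Proof.
move=> up_v; have [down_p child_p] := chain_up_parent up_v.
elim: j => [|j IH] //=; rewrite up_v down_p child_p /=.
case: (greedy_mis j v) (greedy_mis j (parent v)) IH => [] [] //= _;
  rewrite ?andbF //.
apply/negP => /and4P [/and3P [/eqP cv _ _] /eqP cp _ _].
by have := cv_color_proper (cv_rounds b) v; rewrite -/(six_color v) cv -cp eqxx.
Qed.

Definition in_mis (v : T) : bool := greedy_mis 6 v.

Lemma in_mis_indep v : chain_up v -> ~~ (in_mis v && in_mis (parent v)).
Proof. exact: greedy_mis_indep. Qed.

Lemma in_mis_maximal v : on_chain v -> ~~ in_mis v ->
  (chain_up v && in_mis (parent v)) || (chain_down v && in_mis (child v)).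
Proof.
move=> chain_v not_in.
have : ~~ greedy_mis (six_color v).+1 v.
  by apply: contra not_in; apply: greedy_mis_mono; have := six_color_le v.
rewrite /= negb_or eqxx chain_v /= negb_and !negbK => /andP [_].
have mono u : greedy_mis (six_color v) u -> in_mis u.
  exact: greedy_mis_mono (leqW (six_color_le v)).
by case/orP => /andP [-> /mono ->]; rewrite ?orbT.
Qed.

Lemma in_mis_flip v : on_chain v ->
  (chain_up v && (in_mis (parent v) != in_mis v)) ||
  (chain_down v && (in_mis (child v) != in_mis v)).
Proof.
move=> chain_v; case in_v: (in_mis v); last first.
  by case/orP: (in_mis_maximal chain_v (negbT in_v)) => /andP [-> ->]; rewrite ?orbT.
case/orP: chain_v => [up_v | down_v].
  by move: (in_mis_indep up_v); rewrite up_v in_v /= => /negbTE ->.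
have [pc up_c] := chain_down_child down_v.
by move: (in_mis_indep up_c); rewrite pc in_v andbT => /negbTE ->; rewrite down_v orbT.
Qed.

Definition final_color (v : T) : bool :=
  if has_sibling v then odd (rank v)
  else if on_chain v then in_mis v
  else ~~ odd (rank (parent v)).

Definition adjacent_rank (j k : nat) : nat :=
  if odd j then j.-1 else if j.+1 < k then j.+1 else j.-1.

Lemma adjacent_rankP j k : 1 < k -> j < k ->
  [/\ adjacent_rank j k < k, odd (adjacent_rank j k) != odd j &
      (j == (adjacent_rank j k).+1) || (j == (adjacent_rank j k).-1)].
Proof. by rewrite /adjacent_rank => k_gt1 j_lt; case: ifP; [|case: ifP]; split; lia. Qed.

Definition sibling_partner (v : T) : T :=
  nth v (children (parent v)) (adjacent_rank (rank v) (nchildren (parent v))).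

Definition partner (v : T) : T :=
  if has_sibling v then sibling_partner v
  else if chain_up v && (in_mis (parent v) != in_mis v) then parent v
  else if chain_down v && (in_mis (child v) != in_mis v) then child v
  else parent v.

Lemma final_color_chain v : on_chain v -> final_color v = in_mis v.
Proof.
rewrite /final_color => chain_v.
by case/orP: (chain_v) => /andP [/negbTE -> _]; rewrite chain_v.
Qed.

Lemma partner_sibling v : has_sibling v ->
  parent (partner v) = parent v /\
  rank (partner v) = adjacent_rank (rank v) (nchildren (parent v)).
Proof.
rewrite /partner => sib_v; rewrite sib_v.
have [lt_k _ _] := adjacent_rankP sib_v (rank_lt v).
have /eqP p_eq : parent (sibling_partner v) == parent v.
  by rewrite -mem_children mem_nth.
by rewrite /rank p_eq index_uniq // uniq_children.
Qed.

Lemma final_color_partner_chain v :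
  on_chain v -> final_color (partner v) != final_color v.
Proof.
move=> chain_v; have no_sib : has_sibling v = false.
  by case/orP: chain_v => /andP [/negbTE].
rewrite (final_color_chain chain_v) /partner no_sib.
have chain_p : chain_up v -> on_chain (parent v).
  by case/chain_up_parent => down_p _; rewrite /on_chain down_p orbT.
have chain_c : chain_down v -> on_chain (child v).
  by case/chain_down_child => _ up_c; rewrite /on_chain up_c.
case/orP: (in_mis_flip chain_v) => /andP [step ne].
  by rewrite step ne /= final_color_chain ?chain_p.
case: ifP => [/andP [up_v ne'] | _]; first by rewrite final_color_chain ?chain_p.
by rewrite step ne /= final_color_chain ?chain_c.
Qed.

Lemma final_color_partner v : final_color (partner v) != final_color v.
Proof.
case sib_v: (has_sibling v).
  have [p_eq r_eq] := partner_sibling sib_v.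
  have [_ odd_ne _] := adjacent_rankP sib_v (rank_lt v).
  by rewrite /final_color /has_sibling p_eq -/(has_sibling v) sib_v r_eq.
case chain_v: (on_chain v); first exact: final_color_partner_chain.
have /norP [/negbTE up_f /negbTE down_f] := negbT chain_v.
have sib_p : has_sibling (parent v) by move: up_f; rewrite /chain_up sib_v => /negbFE.
rewrite /partner sib_v up_f down_f /final_color sib_p sib_v chain_v.
by case: (odd _).
Qed.

Definition partner_candidates (x : T) : seq T :=
  if has_sibling x then [:: nth x (children (parent x)) (rank x).-1;
                           nth x (children (parent x)) (rank x).+1; child x]
  else [:: parent x; child x].

Lemma mem_partner_candidates v : v \in partner_candidates (partner v).
Proof.
case sib_v: (has_sibling v).
  have [p_eq r_eq] := partner_sibling sib_v.
  have [_ _ adj] := adjacent_rankP sib_v (rank_lt v).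
  have v_nth : v = nth (partner v) (children (parent v)) (rank v).
    by rewrite nth_index // mem_children.
  rewrite /partner_candidates /has_sibling p_eq -/(has_sibling v) sib_v r_eq !inE.
  by case/orP: adj => /eqP <-; rewrite -v_nth eqxx ?orbT.
have no_sib : ~~ has_sibling v by rewrite sib_v.
have v_child := only_child (nchildren_parent no_sib) (erefl _).
have in_parent : v \in partner_candidates (parent v).
  by rewrite /partner_candidates; case: ifP; rewrite !inE -v_child eqxx ?orbT.
rewrite /partner sib_v; do 2 case: ifP => //.
case/andP => down_v _ _; have [pc /andP [no_sib_c _]] := chain_down_child down_v.
by rewrite /partner_candidates (negbTE no_sib_c) pc inE eqxx.
Qed.

Lemma card_partner_fiber x : #|[set v | partner v == x]| <= 3.
Proof.
apply: leq_trans (_ : #|partner_candidates x| <= 3).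
  apply: subset_leq_card; apply/subsetP => v; rewrite inE => /eqP <-.
  exact: mem_partner_candidates.
apply: leq_trans (card_size _) _; rewrite /partner_candidates; by case: ifP.
Qed.

Definition chosen_flags (v : T) : seq nat :=
  [seq nat_of_bool (parent u == v) | u <- nbrs e v].

Definition state_at (r : nat) (v : T) : state :=
  State r (if 0 < r then chosen_flags v else [::])
    ((1 < r) && has_sibling v) ((1 < r) && odd (rank v))
    ((2 < r) && ~~ has_sibling (parent v)) ((2 < r) && odd (rank (parent v)))
    (cv_color (minn (r - 3) (cv_rounds b)) v) (greedy_mis (r - 3 - cv_rounds b) v).

Lemma index_nbrs_eq0 u v : (index v (nbrs e u) == 0) = (parent u == v).
Proof.
rewrite /parent; have := nbrs_gt0 u.
by case: (nbrs e u) => //= x s _; rewrite /index /=; case: (x == v).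
Qed.

Lemma count_chosen_flags x : count_mem 1 (chosen_flags x) = nchildren x.
Proof.
rewrite count_map /nchildren size_filter.
by apply: eq_count => u /=; case: (parent u == x).
Qed.

Lemma count_chosen_flags_take v :
  count_mem 1 (take (index v (nbrs e (parent v))) (chosen_flags (parent v))) = rank v.
Proof.
rewrite -map_take count_map /rank /children.
rewrite -(count_take_index (P := fun u => parent u == parent v)) //.
by apply: eq_count => u /=; case: (parent u == parent v).
Qed.

Lemma msg_parent (f : T -> nat) v : nth 0 [seq f u | u <- nbrs e v] 0 = f (parent v).
Proof. by rewrite (nth_map v) ?nbrs_gt0 // nth0. Qed.

Lemma msg_child (f : T -> nat) v : chain_down v ->
  nth 0 [seq f u | u <- nbrs e v] (index 1 (chosen_flags v)) = f (child v).
Proof.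
case/andP=> _ /eqP v1.
have -> : index 1 (chosen_flags v) = find (fun u => parent u == v) (nbrs e v).
  by rewrite /index find_map; apply: eq_find => u /=; case: (parent u == v).
by rewrite (nth_map v) // -has_find has_count -size_filter -/(children v) -/(nchildren v) v1.
Qed.

Lemma odd_bit (a : bool) n : odd (a + n.*2) = a.
Proof. by rewrite oddD odd_double addbF; case: a. Qed.

Lemma exec_state_at r v : exec (balanced_coloring b) e id r v = state_at r v.
Proof.
elim: r v => [|r IH] v //=; rewrite IH.
under eq_map => u do rewrite IH.
case: r {IH} => [|[|[|k]]].
- rewrite /state_at /=; congr State.
  by apply/eq_in_map => u _; rewrite /send /= index_nbrs_eq0.
- rewrite /state_at /= msg_parent /send /= count_chosen_flags count_chosen_flags_take.
  by rewrite odd_bit half_bit_double; case: (odd (rank v)).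
- rewrite /state_at /= msg_parent /send /= odd_bit half_bit_double.
  by case: (odd (rank (parent v))); case: (has_sibling (parent v)).
rewrite /state_at.
have [-> ->] : k.+3 - 3 = k /\ k.+4 - 3 = k.+1 by split; lia.
rewrite /= msg_parent /send /=.
case k_lt: (k < cv_rounds b).
  have [-> ->] : minn k (cv_rounds b) = k /\ minn k.+1 (cv_rounds b) = k.+1 by split; lia.
  by have [-> ->] : k - cv_rounds b = 0 /\ k.+1 - cv_rounds b = 0 by split; lia.
rewrite /st_chain_up /st_chain_down /= count_chosen_flags -/(chain_up v) -/(chain_down v).
have [-> ->] : minn k (cv_rounds b) = cv_rounds b /\ minn k.+1 (cv_rounds b) = cv_rounds b.
  by split; lia.
have -> : k.+1 - cv_rounds b = (k - cv_rounds b).+1 by lia.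
rewrite -/(six_color v) -/(on_chain v) [greedy_mis _.+1 _]/=; congr State.
congr (_ || [&& _, _, _ & _]); first by case: (greedy_mis _ _).
case: (boolP (chain_down v)) => // down_v.
by rewrite (msg_child (fun u => nat_of_bool (greedy_mis _ u))) //; case: (greedy_mis _ _).
Qed.

Lemma color_of_balanced_coloring v :
  color_of (balanced_coloring b) e id v = final_color v.
Proof.
rewrite /color_of exec_state_at /state_at /=.
have -> : cv_rounds b + 9 - 3 - cv_rounds b = 6 by lia.
by rewrite /output /st_chain_up /st_chain_down /= count_chosen_flags.
Qed.

Lemma balanced_coloring_bandwidth : bandwidth_ok (balanced_coloring b) e id b.+3.
Proof.
move=> r u v _ _; rewrite exec_state_at.
have pow_ge8 : 8 <= 2 ^ b.+3 by rewrite !expnS; have := expn_gt0 2 b; lia.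
have two_bits (x y : bool) : x + y.*2 < 2 ^ b.+3 by case: x; case: y; lia.
case: r => [|[|[|k]]]; rewrite /state_at /=; rewrite /send /=.
- by case: (_ == _); lia.
- exact: two_bits.
- exact: two_bits.
case: ifP => _; last by case: (greedy_mis _ _); lia.
apply: leq_ltn_trans (cv_color_le _ _) _; apply: leq_ltn_trans (cv_bound_le _ _) _.
by rewrite !expnS; have := expn_gt0 2 b; lia.
Qed.

Lemma balanced_coloring_balanced :
  4 * #|[set v | color_of (balanced_coloring b) e id v]| <= 3 * #|T| /\
  4 * #|[set v | ~~ color_of (balanced_coloring b) e id v]| <= 3 * #|T|.
Proof.
have flip v : color_of (balanced_coloring b) e id (partner v) !=
                color_of (balanced_coloring b) e id v.
  by rewrite !color_of_balanced_coloring final_color_partner.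
split; apply: balanced_of_partner card_partner_fiber => v; first exact: flip.
by rewrite (inj_eq negb_inj).
Qed.

End Coloring.
End Pseudoforest.

Lemma bandwidth_ok_le (A : congest_algo) (T : finType) (e : rel T) (id : T -> nat) m n :
  m <= n -> bandwidth_ok A e id m -> bandwidth_ok A e id n.
Proof.
move=> le_mn ok r u v r_lt euv; apply: leq_trans (ok r u v r_lt euv) _.
by rewrite leq_exp2l.
Qed.

Theorem lemma3p1 :
  exists (c : nat) (A : nat -> congest_algo),
    forall b : nat,
      ca_rounds (A b) <= c * log_star b + c /\
      forall (T : finType) (e : rel T) (id : T -> nat),
        symmetric e -> irreflexive e ->
        (forall v : T, exists u : T, e v u) ->
        injective id -> (forall v : T, id v < 2 ^ b) ->
        bandwidth_ok (A b) e id (c * b + c) /\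
        4 * #|[set v | color_of (A b) e id v]| <= 3 * #|T| /\
        4 * #|[set v | ~~ color_of (A b) e id v]| <= 3 * #|T|.
Proof.
exists 12, balanced_coloring => b; split; first by rewrite /= /cv_rounds; lia.
move=> T e id e_sym e_irr e_total id_inj id_lt; split.
  apply: bandwidth_ok_le (balanced_coloring_bandwidth e_irr e_total id_inj id_lt).
  lia.
exact: balanced_coloring_balanced.
Qed.
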